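(* There is an absolute constant $c>0$ such that for all sufficiently large $k$, with $r=2^k\ln 2-\frac{1+\ln 2}{2}-\epsilon_k$, $\epsilon_k=\Theta_k(2^{-k/3})$ and $M=\lceil rN\rceil$, with probability $1-o(1)$ as $N\to\infty$ the following holds: for every set $A\subseteq L$ of literals with $|A|\ge 0.018N$, the set $\mathcal M$ of indices $i\in[M]$ such that at least $0.002k$ of the literals $\Phi_{i1},\dots,\Phi_{ik}$ lie in $A$ satisfies $|\mathcal M|\ge (1-\exp(-ck))M$.
   Context: $\Phi=\Phi_k(N,M)$ is the random $k$-CNF on $V=\{x_1,\dots,x_N\}$ with literal set $L=\{x_1,\neg x_1,\dots,x_N,\neg x_N\}$ and clauses $\Phi_i=\Phi_{i1}\vee\dots\vee\Phi_{ik}$ ($i\in[M]$), each $\Phi_{ij}$ independent and uniform in $L$. Literals in a clause are counted by position. *)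

From mathcomp Require Import all_boot.
From Stdlib Require Import Reals.
Set Implicit Arguments.
Unset Strict Implicit.
Unset Printing Implicit Defensive.

Definition Rleb (x y : R) : bool := if Rle_dec x y then true else false.

(* ceiling of a real, as a natural number (0 for negative values) *)
Definition ceil_nat (x : R) : nat := Z.to_nat (1 - up (- x))%Z.

(* Literals: L = {x_1, ~x_1, ..., x_N, ~x_N} is encoded by 'I_(2*N)
   (any fixed bijection; the statement is invariant under it).
   A k-CNF with M clauses is a function Phi : 'I_M -> 'I_k -> L,
   Phi i j being the j-th literal of clause i (literals counted by position). *)
Definition kcnf (N k M : nat) := {ffun 'I_M -> {ffun 'I_k -> 'I_(2 * N)}}.

Definition hits (N k M : nat) (Phi : kcnf N k M) (A : {set 'I_(2 * N)}) (i : 'I_M) : nat :=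
  #|[set j : 'I_k | Phi i j \in A]|.

Definition heavy (N k M : nat) (Phi : kcnf N k M) (A : {set 'I_(2 * N)}) : {set 'I_M} :=
  [set i : 'I_M | Rleb (0.002 * INR k) (INR (hits Phi A i))].

Definition good_event (c : R) (N k M : nat) (Phi : kcnf N k M) : bool :=
  [forall A : {set 'I_(2 * N)},
     Rleb (0.018 * INR N) (INR #|A|) ==>
     Rleb ((1 - exp (- (c * INR k))) * INR M) (INR #|heavy Phi A|)].

(* probability under the uniform distribution: each Phi_ij independent and
   uniform in L, i.e. Phi uniform over kcnf N k M *)
Definition prob_good (c : R) (N k M : nat) : R :=
  INR #|[set Phi : kcnf N k M | good_event c Phi]| / INR #|[set: kcnf N k M]|.

Definition density (eps : nat -> R) (k : nat) : R :=
  (2 ^ k * ln 2 - (1 + ln 2) / 2 - eps k)%R.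

Definition is_Theta_2_neg_k_third (eps : nat -> R) : Prop :=
  exists C1 C2 : R, exists k1 : nat, (0 < C1)%R /\ (0 < C2)%R /\
    forall k : nat, (k1 <= k)%coq_nat ->
      (C1 * Rpower 2 (- (INR k) / 3) <= eps k <= C2 * Rpower 2 (- (INR k) / 3))%R.

(* A union bound over literal sets combined with an exponential Markov bound.

   Call a clause light for A if fewer than 0.002k of its k literals lie in A.
   For a fixed A with |A| >= 0.018N:
   - a Chernoff-type count over all (2N)^k clauses shows that at most a
     fraction e^{-0.0032k} of them are light for A;
   - hence E[27^{#light clauses of Phi}] <= (1 + d)^M <= e^{dM} with
     d = e^{-0.001k}, and Markov's inequality bounds the probability of having
     more than dM light clauses (i.e. fewer than (1-d)M heavy ones) by e^{-2dM}.
   Summing over the 4^N literal sets A gives a failure probability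
   4^N e^{-2dM} <= e^{-N} as soon as d r >= ln 2 + 1/2, which holds for all
   large k since r ~ 2^k ln 2 while d decays only like e^{-0.001k}. *)

From mathcomp Require Import all_boot.
From Stdlib Require Import Reals Lra Lia ZArith.
From mathcomp Require Import ssrnat.
Set Implicit Arguments. Unset Strict Implicit.

Lemma INR_muln m n : INR (m * n) = (INR m * INR n)%R.
Proof. by rewrite -multE mult_INR. Qed.

Lemma INR_addn m n : INR (m + n) = (INR m + INR n)%R.
Proof. by rewrite -plusE plus_INR. Qed.

Lemma INR_expn m n : INR (m ^ n) = (INR m ^ n)%R.
Proof. by elim: n => [|n IH] //=; rewrite expnS INR_muln IH. Qed.

Lemma pow_card_prod (I : finType) (Q : pred I) (w : nat) :
  w ^ #|[set i | Q i]| = \prod_i (if Q i then w else 1).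
Proof.
rewrite -big_mkcond /= -prod_nat_const; apply: eq_bigl => i /=; exact: in_set.
Qed.

Lemma card_split (T : finType) (p : pred T) :
  #|[set x | p x]| + #|[set x | ~~ p x]| = #|T|.
Proof.
rewrite -(cardsC [set x | p x]); congr (_ + _); apply: eq_card => x.
by rewrite !inE.
Qed.

Lemma sum_if_card (T : finType) (p : pred T) (w : nat) : 0 < w ->
  \sum_(x : T) (if p x then w else 1) = #|T| + (w - 1) * #|[set x | p x]|.
Proof.
move=> w_gt0.
rewrite (eq_bigr (fun x => 1 + (if p x then w - 1 else 0))); last first.
  by move=> x _; case: (p x); rewrite // addnC subnK.
by rewrite big_split /= sum1_card -big_mkcond /= sum_nat_const mulnC cardsE.
Qed.

(* Generating function of the number of coordinates of a uniform function
   I -> J landing in P: it factorises over the coordinates. *)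
Lemma sum_pow_card (I J : finType) (P : pred J) (w : nat) : 0 < w ->
  \sum_(F : {ffun I -> J}) w ^ #|[set i | P (F i)]| =
  (#|J| + (w - 1) * #|[set j | P j]|) ^ #|I|.
Proof.
move=> w_gt0; rewrite -sum_if_card //.
rewrite (eq_bigr (fun F : {ffun I -> J} => \prod_i (if P (F i) then w else 1))); last first.
  by move=> F _; rewrite pow_card_prod.
rewrite -(bigA_distr_bigA (fun (i : I) (j : J) => if P j then w else 1)).
by rewrite prod_nat_const cardT -cardE.
Qed.

(* Chernoff-type count: functions I -> J hitting A at most t times are few,
   since each one contributes at least w^(|I|-t) to the generating function
   of the number of coordinates outside A. *)
Lemma card_few_hits (I J : finType) (A : {set J}) (t w : nat) : 0 < w ->
  #|[set f : {ffun I -> J} | #|[set i | f i \in A]| <= t]| * w ^ (#|I| - t)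
  <= (#|J| + (w - 1) * #|~: A|) ^ #|I|.
Proof.
move=> w_gt0.
have -> : ~: A = [set j | j \notin A] by apply/setP => j; rewrite !inE.
rewrite -sum_pow_card // -sum_nat_const.
set few := [set f | _].
rewrite [X in _ <= X](bigID (mem few)) /=; apply: leq_trans (leq_addr _ _).
apply: leq_sum => f; rewrite inE => few_f.
rewrite leq_pexp2l // -(card_split (fun i => f i \in A)).
by rewrite leq_subLR leq_add2r.
Qed.

Lemma sum_le_card_max (I : finType) (P : pred I) (F : I -> nat) (i0 : I) : P i0 ->
  exists2 i, P i & \sum_(j | P j) F j <= #|I| * F i.
Proof.
move=> Pi0; have [i Pi maxFi] := arg_maxnP F Pi0.
exists i => //; apply: (@leq_trans (\sum_(j | P j) F i)); first exact: leq_sum.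
by rewrite sum_nat_const leq_mul2r max_card orbT.
Qed.

Section Clauses.
Variables (N k M : nat).
Local Notation literal := 'I_(2 * N).
Local Notation clause := {ffun 'I_k -> literal}.

Definition light (A : {set literal}) (f : clause) : bool :=
  ~~ Rleb (0.002 * INR k) (INR #|[set j | f j \in A]|).

Definition n_light_clauses (A : {set literal}) : nat := #|[set f : clause | light A f]|.

Definition n_light (Phi : kcnf N k M) (A : {set literal}) : nat :=
  #|[set i | light A (Phi i)]|.

Lemma card_heavy_light (Phi : kcnf N k M) (A : {set literal}) :
  #|heavy Phi A| + n_light Phi A = M.
Proof.
by rewrite /heavy /n_light /light /hits (card_split (fun i => Rleb _ _)) card_ord.
Qed.

Lemma light_few_hits (A : {set literal}) (f : clause) :
  light A f -> #|[set j | f j \in A]| <= k %/ 500.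
Proof.
rewrite /light /Rleb; case: Rle_dec => // hits_lt _.
rewrite leq_divRL //; apply/leP; apply: INR_le.
rewrite INR_muln; simpl (INR 500); lra.
Qed.

Lemma n_light_clauses_bound (A : {set literal}) :
  n_light_clauses A * 5 ^ (k - k %/ 500) <= (2 * N + 4 * #|~: A|) ^ k.
Proof.
have := card_few_hits 'I_k A (k %/ 500) (isT : 0 < 5).
rewrite !card_ord; apply: leq_trans; rewrite leq_mul2r; apply/orP; right.
apply: subset_leq_card; apply/subsetP => f; rewrite !inE; exact: light_few_hits.
Qed.

(* Exponential moment of the number of light clauses of a uniform formula:
   the M clauses are independent. *)
Lemma light_moment (A : {set literal}) :
  \sum_(Phi : kcnf N k M) 27 ^ n_light Phi A
  = (#|{: clause}| + 26 * n_light_clauses A) ^ M.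
Proof. by rewrite (sum_pow_card 'I_M (light A) (isT : 0 < 27)) card_ord. Qed.

(* Markov's inequality combined with a union bound over the literal sets:
   if every failure of the event is witnessed by a large A with at least t0
   light clauses, the failures are controlled by the moments above. *)
Lemma card_bad_union_markov (c : R) (t0 : nat) :
  (forall (Phi : kcnf N k M) (A : {set literal}), Rleb (0.018 * INR N) (INR #|A|) ->
     ~~ Rleb ((1 - exp (- (c * INR k))) * INR M) (INR #|heavy Phi A|) ->
     t0 <= n_light Phi A) ->
  #|[set Phi : kcnf N k M | ~~ good_event c Phi]| * 27 ^ t0 <=
  \sum_(A : {set literal} | Rleb (0.018 * INR N) (INR #|A|))
     (#|{: clause}| + 26 * n_light_clauses A) ^ M.
Proof.
move=> many_light.
under eq_bigr do rewrite -light_moment.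
rewrite exchange_big /= -sum_nat_const.
set bad := [set Phi | _].
rewrite [X in _ <= X](bigID (mem bad)) /=; apply: leq_trans (leq_addr _ _).
apply: leq_sum => Phi; rewrite inE /good_event negb_forall => /existsP [A].
rewrite negb_imply => /andP [bigA fewheavy].
rewrite (bigD1 A) //=; apply: leq_trans (leq_addr _ _).
by rewrite leq_pexp2l //; apply: many_light.
Qed.

End Clauses.

Open Scope R_scope.

Lemma exp_mono x y : x <= y -> exp x <= exp y.
Proof. by case=> [lt_xy | ->]; [left; exact: exp_increasing | right]. Qed.

Lemma pow_exp x n : exp x ^ n = exp (INR n * x).
Proof.
elim: n => [|n IH]; first by rewrite /= Rmult_0_l exp_0.
by rewrite S_INR /= IH -exp_plus; f_equal; ring.
Qed.

Lemma five_le_exp2 : 5 <= exp 2.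
Proof.
have -> : 2 = /2 + /2 + /2 + /2 by field.
rewrite !exp_plus; have := exp_ineq1_le (/2).
set y := exp (/2) => y_ge.
have y2 : 9/4 <= y * y by nra.
have y3 : 27/8 <= y * y * y by nra.
nra.
Qed.

Lemma exp3_le_27 : exp 3 <= 27.
Proof.
have -> : 3 = 1 + 1 + 1 by ring.
rewrite !exp_plus; have := exp_le_3; have := exp_pos 1.
set y := exp 1 => y_gt0 y_le.
have y2 : y * y <= 9 by nra.
nra.
Qed.

Lemma ln2_bounds : / 2 < ln 2 < 1.
Proof.
split; first exact: ln_lt_2.
rewrite -[X in _ < X](ln_exp 1); apply: ln_increasing; first lra.
have := exp_ineq1 1; lra.
Qed.

Lemma ceil_ge x : x <= INR (ceil_nat x).
Proof.
rewrite /ceil_nat; have [up_gt up_le] := archimed (- x).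
case: (Z_lt_le_dec (1 - up (- x)) 0) => z_sign.
  have -> : Z.to_nat (1 - up (- x)) = 0%nat by lia.
  have : IZR (1 - up (- x)) < 0 by apply: IZR_lt.
  rewrite minus_IZR /=; lra.
rewrite INR_IZR_INZ Z2Nat.id // minus_IZR /=; lra.
Qed.

Lemma ceil_le x (n : nat) : x < INR n -> (ceil_nat x <= n)%N.
Proof.
move=> lt_xn; rewrite /ceil_nat; have [up_gt up_le] := archimed (- x).
have : (- Z.of_nat n < up (- x))%Z.
  by apply: lt_IZR; rewrite opp_IZR -INR_IZR_INZ; lra.
by move=> ?; apply/leP; lia.
Qed.

Lemma card_literal_sets N : INR #|{set 'I_(2 * N)}| = exp (INR N * (2 * ln 2)).
Proof.
rewrite -cardsT -powersetT card_powerset cardsT card_ord INR_expn -pow_exp.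
rewrite -multE pow_mult; congr (_ ^ _).
rewrite (_ : 2 * ln 2 = ln 2 + ln 2); last ring.
rewrite exp_plus exp_ln /=; lra.
Qed.

(* The numerical slack in the count of light clauses: losing a factor 5 on
   k/500 coordinates is more than compensated by the density 0.9928. *)
Lemma five_pow_slack k : 5 ^ (k %/ 500) * 0.9928 ^ k <= exp (- (0.0032 * INR k)).
Proof.
have K_le : INR (k %/ 500) * 500 <= INR k.
  have := le_INR _ _ (elimT leP (leq_divM k 500)).
  by rewrite INR_muln; simpl (INR 500); lra.
have five_pow : 5 ^ (k %/ 500) <= exp (INR (k %/ 500) * 2).
  by rewrite -pow_exp; apply: pow_incr; split; [lra | exact: five_le_exp2].
have r_pow : 0.9928 ^ k <= exp (INR k * -0.0072).
  rewrite -pow_exp; apply: pow_incr; have := exp_ineq1_le (-0.0072); lra.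
apply: Rle_trans (Rmult_le_compat _ _ _ _ _ _ five_pow r_pow) _.
- by apply: pow_le; lra.
- by apply: pow_le; lra.
- by rewrite -exp_plus; apply: exp_mono; lra.
Qed.

Lemma n_light_clauses_real_bound N k (A : {set 'I_(2 * N)}) :
  0.018 * INR N <= INR #|A| ->
  INR (n_light_clauses k A) <= (2 * INR N) ^ k * exp (- (0.0032 * INR k)).
Proof.
move=> bigA.
set K := (k %/ 500)%N.
have nat_bound := le_INR _ _ (elimT leP (n_light_clauses_bound k A)).
have [two four five] : [/\ INR 2 = 2, INR 4 = 4 & INR 5 = 5] by split; simpl; ring.
rewrite INR_muln !INR_expn INR_addn !INR_muln two four five -/K in nat_bound.
have card_compl : INR #|~: A| = 2 * INR N - INR #|A|.
  have := cardsC A; rewrite card_ord => /(f_equal INR).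
  by rewrite INR_addn INR_muln two; lra.
have base_pos : 0 <= 2 * INR N + 4 * INR #|~: A|.
  by have := pos_INR N; have := pos_INR #|~: A|; lra.
have base_le : 2 * INR N + 4 * INR #|~: A| <= 2 * INR N * 5 * 0.9928.
  by rewrite card_compl; have := pos_INR #|A|; lra.
have five_split : 5 ^ k = 5 ^ (k - K) * 5 ^ K.
  by rewrite -pow_add plusE subnK // leq_div.
have five_pos : 0 < 5 ^ (k - K) by apply: pow_lt; lra.
have base_pow_pos : 0 <= (2 * INR N) ^ k * 5 ^ (k - K).
  by apply: Rmult_le_pos; [apply: pow_le; have := pos_INR N; lra | lra].
apply: (Rmult_le_reg_r (5 ^ (k - K))) => //.
apply: (Rle_trans _ _ _ nat_bound).
apply: Rle_trans (pow_incr _ _ k (conj base_pos base_le)) _.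
rewrite Rpow_mult_distr (Rpow_mult_distr (2 * INR N) 5) five_split.
have -> : (2 * INR N) ^ k * (5 ^ (k - K) * 5 ^ K) * 0.9928 ^ k
        = (2 * INR N) ^ k * 5 ^ (k - K) * (5 ^ K * 0.9928 ^ k) by ring.
apply: Rle_trans (Rmult_le_compat_l _ _ _ base_pow_pos (five_pow_slack k)) _.
by right; ring.
Qed.

Lemma light_moment_bound N k M (A : {set 'I_(2 * N)}) d :
  0.018 * INR N <= INR #|A| -> 26 * exp (- (0.0032 * INR k)) <= d ->
  INR ((#|{: {ffun 'I_k -> 'I_(2 * N)}}| + 26 * n_light_clauses k A) ^ M)
  <= INR #|kcnf N k M| * exp (INR M * d).
Proof.
move=> bigA small_d.
have card_clause : INR #|{: {ffun 'I_k -> 'I_(2 * N)}}| = (2 * INR N) ^ k.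
  by rewrite card_ffun !card_ord INR_expn INR_muln.
have D_ge0 : 0 <= (2 * INR N) ^ k by apply: pow_le; have := pos_INR N; lra.
have light_le := n_light_clauses_real_bound k bigA.
have base_le : INR (#|{: {ffun 'I_k -> 'I_(2 * N)}}| + 26 * n_light_clauses k A)
               <= (2 * INR N) ^ k * exp d.
  rewrite INR_addn INR_muln card_clause (_ : INR 26 = 26); last by simpl; ring.
  have := exp_ineq1_le d; have := pos_INR (n_light_clauses k A); nra.
have card_formulas : INR #|kcnf N k M| = ((2 * INR N) ^ k) ^ M.
  by rewrite [in LHS]card_ffun card_ord INR_expn card_clause.
rewrite card_formulas INR_expn -pow_exp -Rpow_mult_distr.
by apply: pow_incr; split; [apply: pos_INR | exact: base_le].
Qed.

(* The 4^N literal sets are paid for by the Markov gain 27^{t0} / e^{dM}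
   when t0 >= dM >= d r N and d r >= ln 2 + 1/2. *)
Lemma union_vs_markov N M t0 d r :
  0 <= d -> r * INR N <= INR M -> d * INR M <= INR t0 -> ln 2 + / 2 <= d * r ->
  exp (INR N * (2 * ln 2)) * exp (INR M * d) <= exp (- INR N) * 27 ^ t0.
Proof.
move=> d_ge0 M_ge t0_ge dr_ge.
have markov : exp (3 * (d * INR M)) <= 27 ^ t0.
  apply: (Rle_trans _ (exp (INR t0 * 3))); first by apply: exp_mono; lra.
  rewrite -pow_exp; apply: pow_incr; split; [left; exact: exp_pos | exact: exp3_le_27].
have exponents : exp (INR N * (2 * ln 2)) * exp (INR M * d)
                 <= exp (- INR N) * exp (3 * (d * INR M)).
  rewrite -!exp_plus; apply: exp_mono.
  have : d * (r * INR N) <= d * INR M by apply: Rmult_le_compat_l.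
  have := pos_INR N; nra.
apply: Rle_trans exponents _; apply: Rmult_le_compat_l => //; left; exact: exp_pos.
Qed.

Lemma card_bad_bound N k M r :
  r * INR N <= INR M ->
  26 * exp (- (0.0032 * INR k)) <= exp (- (0.001 * INR k)) ->
  ln 2 + / 2 <= exp (- (0.001 * INR k)) * r ->
  INR #|[set Phi : kcnf N k M | ~~ good_event 0.001 Phi]|
  <= INR #|kcnf N k M| * exp (- INR N).
Proof.
move=> M_ge small_d dr_ge.
set d := exp (- (0.001 * INR k)) in small_d dr_ge.
have d_gt0 : 0 < d by exact: exp_pos.
set t0 := ceil_nat (d * INR M).
have bad_many_light : forall (Phi : kcnf N k M) (A : {set 'I_(2 * N)}),
    Rleb (0.018 * INR N) (INR #|A|) ->
    ~~ Rleb ((1 - exp (- (0.001 * INR k))) * INR M) (INR #|heavy Phi A|) ->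
    (t0 <= n_light Phi A)%N.
  move=> Phi A _; rewrite /Rleb; case: Rle_dec => // few_heavy _.
  apply: ceil_le; have := card_heavy_light Phi A => /(f_equal INR).
  by rewrite INR_addn -/d in few_heavy * => heavy_light; lra.
have setT_big : Rleb (0.018 * INR N) (INR #|[set: 'I_(2 * N)]|).
  rewrite /Rleb; case: Rle_dec => // [[]].
  by rewrite cardsT card_ord INR_muln; have := pos_INR N; simpl (INR 2); lra.
have [A bigA sum_le] := @sum_le_card_max _
  (fun A : {set 'I_(2 * N)} => Rleb (0.018 * INR N) (INR #|A|))
  (fun A => (#|{: {ffun 'I_k -> 'I_(2 * N)}}| + 26 * n_light_clauses k A) ^ M)%N
  _ setT_big.
have := le_INR _ _ (elimT leP (leq_trans (card_bad_union_markov bad_many_light) sum_le)).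
rewrite !INR_muln INR_expn card_literal_sets (_ : INR 27 = 27); last by simpl; ring.
move=> real_count.
have bigA_real : 0.018 * INR N <= INR #|A| by move: bigA; rewrite /Rleb; case: Rle_dec.
have moment := light_moment_bound M bigA_real small_d.
have trade := union_vs_markov (Rlt_le _ _ d_gt0) M_ge (ceil_ge _) dr_ge.
have traded := Rmult_le_compat_l _ _ _ (pos_INR #|kcnf N k M|) trade.
have union := Rmult_le_compat_l _ _ _ (Rlt_le _ _ (exp_pos (INR N * (2 * ln 2)))) moment.
apply: (Rmult_le_reg_r (27 ^ t0)); first by apply: pow_lt; lra.
apply: (Rle_trans _ _ _ real_count); apply: (Rle_trans _ _ _ union).
by move: traded; rewrite -!Rmult_assoc [_ * INR #|kcnf N k M|]Rmult_comm.
Qed.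

Lemma prob_good_deviation c N k M : (0 < #|kcnf N k M|)%N ->
  Rabs (prob_good c N k M - 1)
  = INR #|[set Phi : kcnf N k M | ~~ good_event c Phi]| / INR #|kcnf N k M|.
Proof.
move=> T_pos; have T_gt0 : 0 < INR #|kcnf N k M| by apply: lt_0_INR; apply/ltP.
have := card_split (fun Phi : kcnf N k M => good_event c Phi) => /(f_equal INR).
rewrite INR_addn /prob_good cardsT => split_good.
have -> : INR #|[set Phi : kcnf N k M | good_event c Phi]| / INR #|kcnf N k M| - 1
          = - (INR #|[set Phi : kcnf N k M | ~~ good_event c Phi]| / INR #|kcnf N k M|).
  have deviation (g b T : R) : T = g + b -> 0 < T -> g / T - 1 = - (b / T).
    by move=> -> gb_gt0; field; lra.
  exact: deviation (esym split_good) T_gt0.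
rewrite Rabs_Ropp Rabs_right //; apply: Rle_ge; apply: Rmult_le_pos.
  exact: pos_INR.
by left; apply: Rinv_0_lt_compat.
Qed.

Lemma prob_good_close N k r : (0 < N)%N ->
  26 * exp (- (0.0032 * INR k)) <= exp (- (0.001 * INR k)) ->
  ln 2 + / 2 <= exp (- (0.001 * INR k)) * r ->
  Rabs (prob_good 0.001 N k (ceil_nat (r * INR N)) - 1) <= exp (- INR N).
Proof.
move=> N_gt0 small_d dr_ge.
set M := ceil_nat (r * INR N).
have T_pos : (0 < #|kcnf N k M|)%N.
  by rewrite !card_ffun !card_ord !expn_gt0 muln_gt0 N_gt0.
have T_gt0 : 0 < INR #|kcnf N k M| by apply: lt_0_INR; apply/ltP.
rewrite prob_good_deviation //.
apply: (Rmult_le_reg_r (INR #|kcnf N k M|)) => //.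
rewrite /Rdiv Rmult_assoc Rinv_l; last lra.
have := @card_bad_bound N k M r (ceil_ge _) small_d dr_ge; lra.
Qed.

Lemma cv_of_exp_bound (u : nat -> R) l :
  (forall N, (0 < N)%N -> Rabs (u N - l) <= exp (- INR N)) -> Un_cv u l.
Proof.
move=> close e e_gt0.
exists (S (ceil_nat (/ e))) => N N_ge; rewrite /R_dist.
have N_gt : / e < INR N.
  by have := le_INR _ _ N_ge; rewrite S_INR; have := ceil_ge (/ e); lra.
have N_pos : (0 < N)%N by apply/ltP; lia.
apply: Rle_lt_trans (close N N_pos) _.
rewrite exp_Ropp; apply: (Rmult_lt_reg_l (exp (INR N))); first exact: exp_pos.
rewrite Rinv_r; last exact: Rgt_not_eq (exp_pos _).
have : 1 < e * INR N.
  by have := Rmult_lt_compat_l e _ _ e_gt0 N_gt; rewrite Rinv_r; lra.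
have := exp_ineq1_le (INR N); have := Rinv_0_lt_compat e e_gt0; nra.
Qed.

Lemma Theta_eventually_bounded eps : is_Theta_2_neg_k_third eps ->
  exists C k1, forall k, (k1 <= k)%coq_nat -> 0 < eps k <= C.
Proof.
move=> [C1 [C2 [k1 [C1_gt0 [C2_gt0 sandwich]]]]].
exists C2, k1 => k k_ge; have [lo hi] := sandwich k k_ge.
have pos : 0 < Rpower 2 (- INR k / 3) by exact: exp_pos.
have le1 : Rpower 2 (- INR k / 3) <= 1.
  rewrite /Rpower -exp_0; apply: exp_mono.
  have [ln2_gt _] := ln2_bounds; have := pos_INR k; nra.
split; nra.
Qed.

(* For k large, both numerical requirements on d = e^{-0.001k} hold:
   26 e^{-0.0032k} <= d, and d r >= ln 2 + 1/2 since d 2^k grows exponentially. *)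
Lemma large_k_conditions (eps : nat -> R) C k :
  0 < eps k <= C -> 12000 + 5 * C <= INR k ->
  26 * exp (- (0.0032 * INR k)) <= exp (- (0.001 * INR k)) /\
  ln 2 + / 2 <= exp (- (0.001 * INR k)) * density eps k.
Proof.
move=> [eps_gt0 eps_le] k_ge.
set d := exp (- (0.001 * INR k)).
have [ln2_gt ln2_lt] := ln2_bounds.
have k_ge0 := pos_INR k.
split.
  have -> : d = exp (0.0022 * INR k) * exp (- (0.0032 * INR k)).
    by rewrite /d -exp_plus; f_equal; lra.
  apply: Rmult_le_compat_r; first by left; apply: exp_pos.
  have := exp_ineq1_le (0.0022 * INR k); lra.
have d_le1 : d <= 1 by rewrite /d -exp_0; apply: exp_mono; lra.
have d_gt0 : 0 < d by exact: exp_pos.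
have d_pow2 : d * 2 ^ k = exp (INR k * (ln 2 - 0.001)).
  rewrite -{1}(exp_ln 2) ?pow_exp /d -?exp_plus; [f_equal; ring | lra].
have growth := exp_ineq1_le (INR k * (ln 2 - 0.001)).
rewrite /density.
have -> : d * (2 ^ k * ln 2 - (1 + ln 2) / 2 - eps k) =
   (d * 2 ^ k) * ln 2 - d * ((1 + ln 2) / 2 + eps k) by ring.
rewrite d_pow2.
have loss : d * ((1 + ln 2) / 2 + eps k) <= (1 + ln 2) / 2 + eps k.
  have : 0 <= (1 + ln 2) / 2 + eps k by lra.
  nra.
have ln2_gap : 0 <= INR k * ((ln 2 - /2) * (ln 2 + 0.499)).
  by apply: Rmult_le_pos => //; apply: Rmult_le_pos; lra.
have gain : (1 + INR k * (ln 2 - 0.001)) * ln 2 <= exp (INR k * (ln 2 - 0.001)) * ln 2.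
  by apply: Rmult_le_compat_r; lra.
nra.
Qed.

Theorem mainTheorem10 :
  exists c : R, (0 < c)%R /\
    forall eps : nat -> R, is_Theta_2_neg_k_third eps ->
      exists k0 : nat, forall k : nat, (k0 <= k)%coq_nat ->
        Un_cv (fun N : nat =>
                 prob_good c N k (ceil_nat (density eps k * INR N)))
              1%R.
Proof.
exists 0.001; split; first lra.
move=> eps /Theta_eventually_bounded [C [k1 eps_bounded]].
exists (k1 + ceil_nat (12000 + 5 * C))%coq_nat => k k_ge.
have k_large : 12000 + 5 * C <= INR k.
  have := le_INR _ _ k_ge; rewrite plus_INR.
  by have := ceil_ge (12000 + 5 * C); have := pos_INR k1; lra.
have [small_d dr_ge] := large_k_conditions (eps_bounded k ltac:(lia)) k_large.
apply: cv_of_exp_bound => N N_gt0.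
exact: prob_good_close.
Qed.
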